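(* Let $\Gamma$ be a Veldkamp $n$-gon ($n\ge2$) and let $(x_0,x_1,\dots,x_n)$ and $(y_0,y_1,\dots,y_n)$ be two roots with $x_0=y_0$ and $x_n=y_n$. Then $x_1$ and $y_1$ are opposite at $x_0$ (i.e. $x_1\equiv_{x_0}y_1$) if and only if $x_{n-1}$ and $y_{n-1}$ are opposite at $x_n$.
   Context: A graph is a pair $(V,E)$ with $E$ a set of $2$-element subsets of $V$; $\Gamma_v$ is the set of neighbors of $v$. An $s$-path is a sequence $(x_0,\dots,x_s)$ of vertices with consecutive vertices adjacent and $x_{i-2}\ne x_i$ for $i\in[2,s]$. A closed $s$-path is an $s$-path with $s\ge 3$ whose first and last vertices coincide; an $s$-circuit is the subgraph determined by a closed $s$-path. An opposition relation on a set $X$ is a symmetric anti-reflexive relation; it is $k$-plump if for every $S\subseteq X$ with $|S|\le k$ some element of $X$ is opposite all elements of $S$. A Veldkamp graph is a graph with a $2$-plump opposition relation $\equiv_v$ on $\Gamma_v$ for each vertex $v$. A path $(v_0,\dots,v_s)$ is straight if $v_{i-1}\equiv_{v_i}v_{i+1}$ for all $i\in[1,s-1]$; a circuit is straight if every path in it is straight. A Veldkamp $n$-gon ($n\ge2$) is a Veldkamp graph satisfying (VP1) connected and bipartite; (VP2) for each $k\in[1,n-1]$ each straight $k$-path is the unique straight path between its endpoints of length at most $k$; (VP3) every straight $(n+1)$-path lies in a straight $2n$-circuit. A root is a straight $n$-path. *)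

From Stdlib Require Import Arith Lia List Relations.
Import ListNotations.

Definition is_graph {V : Type} (adj : V -> V -> Prop) : Prop :=
  (forall u v, adj u v -> adj v u) /\ (forall u, ~ adj u u).

Definition opposition_rel {V : Type} (X : V -> Prop) (R : V -> V -> Prop) : Prop :=
  (forall a b, R a b -> X a /\ X b) /\
  (forall a b, R a b -> R b a) /\
  (forall a, ~ R a a).

Definition plump {V : Type} (k : nat) (X : V -> Prop) (R : V -> V -> Prop) : Prop :=
  forall S : list V, (forall s, In s S -> X s) -> length S <= k ->
    exists c, X c /\ forall s, In s S -> R c s.

Definition veldkamp_graph {V : Type} (adj : V -> V -> Prop)
    (opp : V -> V -> V -> Prop) : Prop :=
  is_graph adj /\
  forall v, opposition_rel (adj v) (opp v) /\ plump 2 (adj v) (opp v).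

(* An s-path is the sequence (p 0, ..., p s). *)
Definition is_path {V : Type} (adj : V -> V -> Prop) (s : nat) (p : nat -> V) : Prop :=
  (forall i, i < s -> adj (p i) (p (S i))) /\
  (forall i, 2 <= i <= s -> p (i - 2) <> p i).

Definition straight {V : Type} (opp : V -> V -> V -> Prop) (s : nat) (p : nat -> V) : Prop :=
  forall i, 1 <= i <= s - 1 -> opp (p i) (p (i - 1)) (p (S i)).

Definition straight_path {V : Type} adj opp (s : nat) (p : nat -> V) : Prop :=
  is_path adj s p /\ straight opp s p.

Definition closed_path {V : Type} (adj : V -> V -> Prop) (s : nat) (c : nat -> V) : Prop :=
  3 <= s /\ is_path adj s c /\ c 0 = c s.

Definition circ_vertex {V : Type} (s : nat) (c : nat -> V) (v : V) : Prop :=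
  exists i, i <= s /\ c i = v.

Definition circ_edge {V : Type} (s : nat) (c : nat -> V) (u v : V) : Prop :=
  exists i, i < s /\ ((c i = u /\ c (S i) = v) \/ (c i = v /\ c (S i) = u)).

Definition path_in_circuit {V : Type} (s : nat) (c : nat -> V) (m : nat) (p : nat -> V) : Prop :=
  (forall i, i <= m -> circ_vertex s c (p i)) /\
  (forall i, i < m -> circ_edge s c (p i) (p (S i))).

Definition straight_circuit {V : Type} adj opp (s : nat) (c : nat -> V) : Prop :=
  forall m p, is_path adj m p -> path_in_circuit s c m p -> straight opp m p.

Definition connected {V : Type} (adj : V -> V -> Prop) : Prop :=
  forall u v, clos_refl_trans V adj u v.

Definition bipartite {V : Type} (adj : V -> V -> Prop) : Prop :=
  exists col : V -> bool, forall u v, adj u v -> col u <> col v.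

Definition veldkamp_ngon {V : Type} (adj : V -> V -> Prop)
    (opp : V -> V -> V -> Prop) (n : nat) : Prop :=
  2 <= n /\ veldkamp_graph adj opp /\
  (connected adj /\ bipartite adj) /\
  (forall k p, 1 <= k <= n - 1 -> straight_path adj opp k p ->
     forall j q, j <= k -> straight_path adj opp j q ->
       q 0 = p 0 -> q j = p k -> j = k /\ forall i, i <= k -> q i = p i) /\
  (forall p, straight_path adj opp (n + 1) p ->
     exists c, closed_path adj (2 * n) c /\ straight_circuit adj opp (2 * n) c /\
               path_in_circuit (2 * n) c (n + 1) p).

Definition root {V : Type} adj opp (n : nat) (p : nat -> V) : Prop :=
  straight_path adj opp n p.

From Stdlib Require Import Arith Lia ZArith.

(* Suppose x_1 and y_1 are opposite at x_0 = y_0.  Then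
     P = (x_n = y_n, y_{n-1}, ..., y_1, y_0 = x_0, x_1)
   is a straight (n+1)-path, so by (VP3) it lies in a straight circuit c of
   length 2n.  Reading c as a 2n-periodic sequence on Z, (VP2) shows that c
   has no shortcuts (c a = c b only if a = b mod 2n), hence every
   non-backtracking path inside the circuit runs along consecutive indices in
   a fixed direction; so P = (c m, c (m+s), ..., c (m+(n+1)s)).  Continuing
   n-1 more steps from x_1 = c (m+(n+1)s) gives a straight path to c (m+2ns)
   = x_n, which by (VP2) must be (x_1, ..., x_n).  Hence x_{n-1} = c (m-s),
   while y_{n-1} = c (m+s), and these are opposite at c m = x_n because the
   circuit is straight.  The converse follows by reversing both roots. *)

(* (VP2): a straight k-path (1 <= k <= n-1) is the unique straight path of
   length at most k between its endpoints. *)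
Definition unique_short_straight_paths {V : Type} (adj : V -> V -> Prop)
    (opp : V -> V -> V -> Prop) (n : nat) : Prop :=
  forall k p, 1 <= k <= n - 1 -> straight_path adj opp k p ->
    forall j q, j <= k -> straight_path adj opp j q ->
      q 0 = p 0 -> q j = p k -> j = k /\ forall i, i <= k -> q i = p i.

(* (VP3): every straight (n+1)-path lies in a straight 2n-circuit. *)
Definition straight_paths_in_circuits {V : Type} (adj : V -> V -> Prop)
    (opp : V -> V -> V -> Prop) (n : nat) : Prop :=
  forall p, straight_path adj opp (n + 1) p ->
    exists c, closed_path adj (2 * n) c /\ straight_circuit adj opp (2 * n) c /\
              path_in_circuit (2 * n) c (n + 1) p.

Lemma veldkamp_graph_facts {V : Type} (adj : V -> V -> Prop) (opp : V -> V -> V -> Prop) :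
  veldkamp_graph adj opp ->
  (forall u v, adj u v -> adj v u) /\ (forall v a b, opp v a b -> opp v b a) /\
  (forall v a, ~ opp v a a).
Proof.
  intros [[Hsym _] Hopp]. split; [exact Hsym|split].
  - intros v. apply (Hopp v).
  - intros v. apply (Hopp v).
Qed.

Section VeldkampPolygon.

Variables (V : Type) (adj : V -> V -> Prop) (opp : V -> V -> V -> Prop).
Hypothesis adj_sym : forall u v, adj u v -> adj v u.
Hypothesis opp_sym : forall v a b, opp v a b -> opp v b a.
Hypothesis opp_irrefl : forall v a, ~ opp v a a.

(* A straight walk never backtracks, since nothing is opposite itself; so a
   walk is a straight path as soon as it is straight. *)
Lemma straight_path_intro (L : nat) (w : nat -> V) :
  (forall i, i < L -> adj (w i) (w (S i))) -> straight opp L w ->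
  straight_path adj opp L w.
Proof.
  intros Hadj Hst. split; [split|]; auto.
  intros i Hi Heq. specialize (Hst (i - 1) ltac:(lia)).
  replace (i - 1 - 1) with (i - 2) in Hst by lia.
  replace (S (i - 1)) with i in Hst by lia.
  rewrite Heq in Hst. exact (opp_irrefl _ _ Hst).
Qed.

Lemma straight_path_sub (L : nat) (p : nat -> V) (a b : nat) :
  straight_path adj opp L p -> a <= b <= L ->
  straight_path adj opp (b - a) (fun i => p (a + i)).
Proof.
  intros [[Hadj _] Hst] Hab. apply straight_path_intro.
  - intros i Hi. replace (a + S i) with (S (a + i)) by lia. apply Hadj. lia.
  - intros i Hi. specialize (Hst (a + i) ltac:(lia)).
    replace (a + (i - 1)) with (a + i - 1) by lia.
    replace (a + S i) with (S (a + i)) by lia. exact Hst.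
Qed.

Lemma straight_path_rev (L : nat) (p : nat -> V) :
  straight_path adj opp L p -> straight_path adj opp L (fun i => p (L - i)).
Proof.
  intros [[Hadj _] Hst]. apply straight_path_intro.
  - intros i Hi. apply adj_sym. replace (L - i) with (S (L - S i)) by lia.
    apply Hadj. lia.
  - intros i Hi. apply opp_sym. replace (L - (i - 1)) with (S (L - i)) by lia.
    replace (L - S i) with (L - i - 1) by lia. apply Hst. lia.
Qed.

Lemma straight_path_snoc (L : nat) (p : nat -> V) (v : V) :
  straight_path adj opp L p -> adj (p L) v -> opp (p L) (p (L - 1)) v ->
  straight_path adj opp (S L) (fun i => if i <=? L then p i else v).
Proof.
  intros [[Hadj _] Hst] HadjL HoppL. apply straight_path_intro.
  - intros i Hi. destruct (Nat.leb_spec i L), (Nat.leb_spec (S i) L); try lia.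
    + apply Hadj. lia.
    + replace i with L by lia. exact HadjL.
  - intros i Hi.
    destruct (Nat.leb_spec i L), (Nat.leb_spec (i - 1) L), (Nat.leb_spec (S i) L);
      try lia.
    + apply Hst. lia.
    + replace i with L by lia. exact HoppL.
Qed.

Variable n : nat.
Hypothesis n_ge2 : 2 <= n.
Hypothesis unique_short : unique_short_straight_paths adj opp n.

Section StraightCircuit.

Variable c : nat -> V.
Hypothesis c_closed : closed_path adj (2 * n) c.
Hypothesis c_straight : straight_circuit adj opp (2 * n) c.

(* The closed path c is itself a straight path: it lies in its own circuit. *)
Lemma circuit_straight_path : straight_path adj opp (2 * n) c.
Proof.
  destruct c_closed as [_ [Hpath _]]. split; [exact Hpath|].
  apply (c_straight (2 * n) c Hpath). split.
  - intros i Hi. exists i. auto.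
  - intros i Hi. exists i. auto.
Qed.

(* The two neighbours of the base point c 0 on the circuit are distinct:
   otherwise (VP2) would identify the two arcs of length n-1 from c 1 to c n,
   forcing c (n-1) = c (n+1), a backtrack of c. *)
Lemma circuit_wrap_distinct : c (2 * n - 1) <> c 1.
Proof.
  intros E. pose proof circuit_straight_path as Hc.
  pose proof (straight_path_sub _ _ 1 n Hc ltac:(lia)) as Hp.
  pose proof (straight_path_rev _ _
                (straight_path_sub _ _ n (2 * n - 1) Hc ltac:(lia))) as Hq.
  replace (2 * n - 1 - n) with (n - 1) in Hq by lia.
  destruct (unique_short (n - 1) _ ltac:(lia) Hp (n - 1) _ (Nat.le_refl _) Hq)
    as [_ Heq].
  - cbv beta. transitivity (c (2 * n - 1)); [f_equal; lia | rewrite E; f_equal].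
  - cbv beta. f_equal. lia.
  - specialize (Heq (n - 2) ltac:(lia)). cbv beta in Heq.
    destruct Hc as [[_ Hnb] _]. apply (Hnb (n + 1) ltac:(lia)).
    replace (n + 1 - 2) with (1 + (n - 2)) by lia. rewrite <- Heq. f_equal. lia.
Qed.

Lemma circuit_straight_at_base : opp (c 0) (c (2 * n - 1)) (c 1).
Proof.
  destruct c_closed as [_ [[Hadj _] Hc0]].
  assert (Hlast : adj (c (2 * n - 1)) (c 0)).
  { rewrite Hc0. replace (2 * n) with (S (2 * n - 1)) at 2 by lia. apply Hadj. lia. }
  set (w := fun j => match j with 0 => c (2 * n - 1) | 1 => c 0 | _ => c 1 end).
  assert (Hw : is_path adj 2 w).
  { split.
    - intros [|[|j]] Hj; try lia; [exact Hlast | apply Hadj; lia].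
    - intros [|[|[|j]]] Hj; try lia. exact circuit_wrap_distinct. }
  refine (c_straight 2 w Hw _ 1 ltac:(lia)). split.
  - intros [|[|[|j]]] Hj; try lia; cbn.
    + exists (2 * n - 1). split; [lia | reflexivity].
    + exists 0. split; [lia | reflexivity].
    + exists 1. split; [lia | reflexivity].
  - intros [|[|j]] Hj; try lia; cbn.
    + exists (2 * n - 1). split; [lia|]. left. split; [reflexivity|].
      rewrite Hc0. f_equal. lia.
    + exists 0. split; [lia|]. left. auto.
Qed.

Local Notation period := (Z.of_nat (2 * n)).

Definition cyc (z : Z) : V := c (Z.to_nat (z mod period)).

Lemma cyc_periodic (z t : Z) : cyc (z + period * t) = cyc z.
Proof.
  unfold cyc. rewrite (Z.mul_comm _ t), Z.mod_add; [reflexivity | lia].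
Qed.

Lemma cyc_of_nat (i : nat) : i <= 2 * n -> cyc (Z.of_nat i) = c i.
Proof.
  intros Hi. unfold cyc. destruct (Nat.eq_dec i (2 * n)) as [->|Hne].
  - rewrite Z.mod_same by lia. exact (proj2 (proj2 c_closed)).
  - rewrite Z.mod_small by lia. rewrite Nat2Z.id. reflexivity.
Qed.

Lemma cyc_decompose (z : Z) :
  exists i t, i < 2 * n /\ z = (Z.of_nat i + period * t)%Z.
Proof.
  exists (Z.to_nat (z mod period)), (z / period)%Z.
  pose proof (Z.mod_pos_bound z period ltac:(lia)).
  pose proof (Z.div_mod z period ltac:(lia)). split; lia.
Qed.

Lemma cyc_adj (z : Z) : adj (cyc z) (cyc (z + 1)).
Proof.
  destruct (cyc_decompose z) as [i [t [Hi ->]]].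
  replace (Z.of_nat i + period * t + 1)%Z with (Z.of_nat (S i) + period * t)%Z by lia.
  rewrite !cyc_periodic, !cyc_of_nat by lia. apply c_closed. lia.
Qed.

Lemma cyc_straight (z : Z) : opp (cyc z) (cyc (z - 1)) (cyc (z + 1)).
Proof.
  destruct (cyc_decompose z) as [[|i] [t [Hi ->]]].
  - replace (Z.of_nat 0 + period * t)%Z with (Z.of_nat (2 * n) + period * (t - 1))%Z
      by lia.
    replace (Z.of_nat (2 * n) + period * (t - 1) - 1)%Z
      with (Z.of_nat (2 * n - 1) + period * (t - 1))%Z by lia.
    replace (Z.of_nat (2 * n) + period * (t - 1) + 1)%Z
      with (Z.of_nat 1 + period * t)%Z by lia.
    rewrite !cyc_periodic, !cyc_of_nat by lia.
    destruct c_closed as [_ [_ <-]]. exact circuit_straight_at_base.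
  - replace (Z.of_nat (S i) + period * t - 1)%Z with (Z.of_nat i + period * t)%Z by lia.
    replace (Z.of_nat (S i) + period * t + 1)%Z
      with (Z.of_nat (S (S i)) + period * t)%Z by lia.
    rewrite !cyc_periodic, !cyc_of_nat by lia.
    destruct circuit_straight_path as [_ Hst].
    specialize (Hst (S i) ltac:(lia)). rewrite Nat.sub_1_r in Hst. exact Hst.
Qed.

Lemma cyc_segment (a s : Z) (L : nat) : (s = 1 \/ s = -1)%Z ->
  straight_path adj opp L (fun i => cyc (a + s * Z.of_nat i)).
Proof.
  intros Hs. apply straight_path_intro.
  - intros i Hi. destruct Hs as [-> | ->].
    + replace (a + 1 * Z.of_nat (S i))%Z with (a + 1 * Z.of_nat i + 1)%Z by lia.
      apply cyc_adj.
    + apply adj_sym.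
      replace (a + -1 * Z.of_nat i)%Z with (a + -1 * Z.of_nat (S i) + 1)%Z by lia.
      apply cyc_adj.
  - intros i Hi. destruct Hs as [-> | ->].
    + replace (a + 1 * Z.of_nat (i - 1))%Z with (a + 1 * Z.of_nat i - 1)%Z by lia.
      replace (a + 1 * Z.of_nat (S i))%Z with (a + 1 * Z.of_nat i + 1)%Z by lia.
      apply cyc_straight.
    + apply opp_sym.
      replace (a + -1 * Z.of_nat (i - 1))%Z with (a + -1 * Z.of_nat i + 1)%Z by lia.
      replace (a + -1 * Z.of_nat (S i))%Z with (a + -1 * Z.of_nat i - 1)%Z by lia.
      apply cyc_straight.
Qed.

(* A straight walk of length 1..n-1 along the circuit cannot close up, since
   by (VP2) it would have to coincide with the trivial path. *)
Lemma cyc_no_short_loop (a : Z) (L : nat) :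
  1 <= L <= n - 1 -> cyc (a + Z.of_nat L) <> cyc a.
Proof.
  intros HL E.
  assert (Hconst : straight_path adj opp 0 (fun _ => cyc a)).
  { apply straight_path_intro; intros i Hi; lia. }
  destruct (unique_short L _ HL (cyc_segment a 1 L (or_introl eq_refl))
              0 _ ltac:(lia) Hconst) as [Hj _]; cbv beta.
  - f_equal. lia.
  - rewrite <- E. f_equal. lia.
  - lia.
Qed.

Lemma cyc_injective (a b : Z) : cyc a = cyc b -> ~ (0 < b - a < period)%Z.
Proof.
  intros E Hab.
  destruct (lt_eq_lt_dec (Z.to_nat (b - a)) n) as [[Hl|Hl]|Hl].
  - apply (cyc_no_short_loop a (Z.to_nat (b - a))); [lia|].
    rewrite E. f_equal. lia.
  - (* Two straight paths from c (a+n-1) to c a = c b, of lengths n-1 and 1. *)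
    destruct (unique_short (n - 1) _ ltac:(lia)
                (cyc_segment (a + Z.of_nat (n - 1)) (-1) (n - 1) (or_intror eq_refl))
                1 _ ltac:(lia)
                (cyc_segment (a + Z.of_nat (n - 1)) 1 1 (or_introl eq_refl)))
      as [Hj _]; cbv beta.
    + f_equal.
    + transitivity (cyc b); [f_equal; lia | rewrite <- E; f_equal; lia].
    + (* so n = 2, and the circuit would backtrack at a+1 *)
      destruct (cyc_segment a 1 2 (or_introl eq_refl)) as [[_ Hnb] _].
      apply (Hnb 2 ltac:(lia)). cbv beta.
      transitivity (cyc a); [f_equal; lia | rewrite E; f_equal; lia].
  - apply (cyc_no_short_loop b (2 * n - Z.to_nat (b - a))); [lia|].
    rewrite <- E, <- (cyc_periodic a 1). f_equal. lia.
Qed.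

Lemma cyc_eq_mod (a b : Z) : cyc a = cyc b -> exists t, b = (a + period * t)%Z.
Proof.
  intros E. destruct (cyc_decompose (b - a)) as [[|r] [t [Hr Ht]]].
  - exists t. lia.
  - exfalso. apply (cyc_injective a (a + Z.of_nat (S r))); [|lia].
    rewrite E, <- (cyc_periodic (a + Z.of_nat (S r)) t). f_equal. lia.
Qed.

Lemma circuit_edge_step (a s : Z) (u v : V) : (s = 1 \/ s = -1)%Z ->
  u = cyc a -> circ_edge (2 * n) c u v -> v = cyc (a + s) \/ v = cyc (a - s).
Proof.
  intros Hs -> [i [Hi Hend]].
  assert (Hi1 : c (S i) = cyc (Z.of_nat i + 1)).
  { rewrite <- cyc_of_nat by lia. f_equal. lia. }
  rewrite <- cyc_of_nat in Hend by lia. rewrite Hi1 in Hend.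
  destruct Hend as [[Ea Ev] | [Ev Ea]].
  - destruct (cyc_eq_mod _ _ Ea) as [t ->]. rewrite <- Ev.
    destruct Hs as [-> | ->]; [left | right];
      rewrite <- (cyc_periodic _ t); f_equal; lia.
  - destruct (cyc_eq_mod _ _ Ea) as [t Ht]. rewrite <- Ev.
    destruct Hs as [-> | ->]; [right | left];
      rewrite <- (cyc_periodic (Z.of_nat i) t); f_equal; lia.
Qed.

Lemma path_follows_circuit (L : nat) (w : nat -> V) :
  1 <= L -> is_path adj L w -> path_in_circuit (2 * n) c L w ->
  exists m s, (s = 1 \/ s = -1)%Z /\
    forall t, t <= L -> w t = cyc (m + s * Z.of_nat t).
Proof.
  intros HL [_ Hnb] [Hvert Hedge].
  enough (H : forall k, 1 <= k <= L -> exists m s, (s = 1 \/ s = -1)%Z /\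
            forall t, t <= k -> w t = cyc (m + s * Z.of_nat t))
    by (apply H; lia).
  induction k as [|k IH]; intros Hk; [lia|].
  destruct k as [|k].
  - destruct (Hvert 0 ltac:(lia)) as [i [Hi Ei]].
    rewrite <- cyc_of_nat in Ei by lia.
    exists (Z.of_nat i).
    destruct (circuit_edge_step (Z.of_nat i) 1 _ _ (or_introl eq_refl) (eq_sym Ei)
                (Hedge 0 ltac:(lia))) as [E | E];
      [exists 1%Z | exists (-1)%Z]; (split; [auto|]);
      intros [|[|t]] Ht; try lia;
      rewrite ?E, <- ?Ei; f_equal; lia.
  - destruct (IH ltac:(lia)) as [m [s [Hs Hw]]].
    exists m, s. split; [exact Hs|]. intros t Ht.
    destruct (Nat.eq_dec t (S (S k))) as [->|]; [|apply Hw; lia].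
    destruct (circuit_edge_step (m + s * Z.of_nat (S k)) s _ _ Hs
                (Hw (S k) ltac:(lia)) (Hedge (S k) ltac:(lia))) as [E | E].
    + rewrite E. f_equal. nia.
    + exfalso. apply (Hnb (S (S k)) ltac:(lia)).
      replace (S (S k) - 2) with k by lia. rewrite E, Hw by lia. f_equal. nia.
Qed.

End StraightCircuit.

Hypothesis circuits : straight_paths_in_circuits adj opp n.

Lemma opposition_transfer (x y : nat -> V) :
  root adj opp n x -> root adj opp n y -> x 0 = y 0 -> x n = y n ->
  opp (x 0) (x 1) (y 1) -> opp (x n) (x (n - 1)) (y (n - 1)).
Proof.
  intros Hx Hy H0 Hn Hop.
  (* P = (y_n, ..., y_1, y_0 = x_0, x_1) is a straight (n+1)-path. *)
  set (P := fun i => if i <=? n then y (n - i) else x 1).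
  assert (HP : straight_path adj opp (n + 1) P).
  { rewrite Nat.add_1_r. apply straight_path_snoc; [exact (straight_path_rev _ _ Hy) | |].
    - rewrite Nat.sub_diag, <- H0. apply Hx. lia.
    - rewrite Nat.sub_diag, <- H0. replace (n - (n - 1)) with 1 by lia.
      apply opp_sym, Hop. }
  destruct (circuits P HP) as [c [Hc [Hcs HPc]]].
  destruct (path_follows_circuit c Hc Hcs (n + 1) P ltac:(lia) (proj1 HP) HPc)
    as [m [s [Hs HPm]]].
  assert (Px1 : x 1 = cyc c (m + s * Z.of_nat (n + 1))).
  { rewrite <- HPm by lia. unfold P. destruct (Nat.leb_spec (n + 1) n); [lia | auto]. }
  assert (Pxn : x n = cyc c m).
  { transitivity (P 0); [| rewrite HPm by lia; f_equal; lia].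
    unfold P. cbn. rewrite Nat.sub_0_r. exact Hn. }
  assert (Py : y (n - 1) = cyc c (m + s)).
  { transitivity (P 1); [| rewrite HPm by lia; f_equal; lia].
    unfold P. destruct (Nat.leb_spec 1 n); [reflexivity | lia]. }
  (* By (VP2), (x_1, ..., x_n) is the arc of the circuit continuing P. *)
  destruct (unique_short (n - 1) _ ltac:(lia) (straight_path_sub _ _ 1 n Hx ltac:(lia))
              (n - 1) _ (Nat.le_refl _)
              (cyc_segment c Hc Hcs (m + s * Z.of_nat (n + 1)) s (n - 1) Hs))
    as [_ Harc]; cbv beta.
  - rewrite Nat.add_0_r, Px1. f_equal. lia.
  - replace (1 + (n - 1)) with n by lia. rewrite Pxn.
    rewrite <- (cyc_periodic c m s). f_equal. nia.
  - specialize (Harc (n - 2) ltac:(lia)). cbv beta in Harc.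
    replace (1 + (n - 2)) with (n - 1) in Harc by lia.
    rewrite <- Harc, Pxn, Py.
    replace (m + s * Z.of_nat (n + 1) + s * Z.of_nat (n - 2))%Z
      with (m - s + Z.of_nat (2 * n) * s)%Z by nia.
    rewrite cyc_periodic.
    destruct Hs as [-> | ->]; [| apply opp_sym]; apply (cyc_straight c Hc Hcs).
Qed.

End VeldkampPolygon.

Theorem proposition2p16 (V : Type) (adj : V -> V -> Prop)
    (opp : V -> V -> V -> Prop) (n : nat) :
  2 <= n -> veldkamp_ngon adj opp n ->
  forall x y : nat -> V, root adj opp n x -> root adj opp n y ->
    x 0 = y 0 -> x n = y n ->
    (opp (x 0) (x 1) (y 1) <-> opp (x n) (x (n - 1)) (y (n - 1))).
Proof.
  intros Hn [_ [Hgraph [_ [Hunique Hcircuits]]]] x y Hx Hy H0 Hnn.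
  destruct (veldkamp_graph_facts adj opp Hgraph) as (Hadj & Hsym & Hirr).
  split.
  - exact (opposition_transfer V adj opp Hadj Hsym Hirr n Hn Hunique Hcircuits
             x y Hx Hy H0 Hnn).
  -
    intros Hop.
    pose proof (opposition_transfer V adj opp Hadj Hsym Hirr n Hn Hunique Hcircuits
                  (fun i => x (n - i)) (fun i => y (n - i))
                  (straight_path_rev _ _ _ Hadj Hsym Hirr _ _ Hx)
                  (straight_path_rev _ _ _ Hadj Hsym Hirr _ _ Hy)) as Hrev.
    cbv beta in Hrev. rewrite Nat.sub_0_r, Nat.sub_diag in Hrev.
    replace (n - (n - 1)) with 1 in Hrev by lia.
    apply Hrev; auto.
Qed.
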